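(* For each of the sets $\{000,001,010,100\}$, $\{000,001,010,100,111\}$ and $\{000,001,010,111\}$, and for every set obtained from any of them by any sequence of coordinate negations and coordinate permutations, $\rho(\mathcal S)=\log_2 6$.
   Context: Binary triples $(x_1,x_2,x_3)\in\{0,1\}^3$ are written $x_1x_2x_3$. Let $\mathcal S\subseteq\{0,1\}^3$ be nonempty. A distribution scheme with domain $\mathcal S$ is a pair $(P_R,\psi)$ where $P_R$ is a probability distribution on a finite set $\mathcal R$ and $\psi:\mathcal S\times\mathcal R\to\mathcal W_{12}\times\mathcal W_{23}\times\mathcal W_{31}$ for finite share alphabets. Given $\mathbf x=(x_1,x_2,x_3)\in\mathcal S$, the shares are $(W_{12},W_{23},W_{31})=\psi(\mathbf x,R)$, $R\sim P_R$. Party $P_1$ sees $V_1=(W_{12},W_{31})$, $P_2$ sees $V_2=(W_{23},W_{12})$, $P_3$ sees $V_3=(W_{31},W_{23})$. It is a 3SS scheme if (Correctness) for each $i$ there is a function $\phi_i$ with $\Pr[\phi_i(V_i)=x_i]=1$ for every $\mathbf x\in\mathcal S$, and (Perfect privacy) for each $i$ and all $\mathbf x,\mathbf x'\in\mathcal S$ with $x_i=x'_i$, $V_i$ has the same distribution under secret $\mathbf x$ as under $\mathbf x'$. The randomness complexity $\rho(\mathcal S)$ is the minimum of $\log_2|\mathcal R|$ over all 3SS schemes with domain $\mathcal S$. A coordinate negation maps $\mathcal S$ to $\{\mathbf x\oplus e_i:\mathbf x\in\mathcal S\}$; a coordinate permutation permutes the three coordinates of every element. *)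

From HB Require Import structures.
From mathcomp Require Import all_boot all_order all_algebra all_fingroup.
From Stdlib Require Import Reals.
From mathcomp Require Import Rstruct.

Set Implicit Arguments.
Unset Strict Implicit.
Unset Printing Implicit Defensive.

Import Order.TTheory GRing.Theory Num.Theory.

(* Binary triples x = (x_1,x_2,x_3), coordinates indexed by 'I_3 = {0,1,2}
   (index 0 is x_1, index 1 is x_2, index 2 is x_3). *)
Definition triple := {ffun 'I_3 -> bool}.

Definition tr (a b c : bool) : triple :=
  [ffun i : 'I_3 => nth false [:: a; b; c] (nat_of_ord i)].

Definition neg_coord (i : 'I_3) (x : triple) : triple :=
  [ffun j => if j == i then ~~ x j else x j].
Definition negate_set (i : 'I_3) (S : {set triple}) : {set triple} :=
  [set neg_coord i x | x in S].

Definition perm_coord (s : 'S_3) (x : triple) : triple := [ffun j => x (s j)].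
Definition permute_set (s : 'S_3) (S : {set triple}) : {set triple} :=
  [set perm_coord s x | x in S].

Inductive obtained_from (S0 : {set triple}) : {set triple} -> Prop :=
| obt_refl : obtained_from S0 S0
| obt_neg i S : obtained_from S0 S -> obtained_from S0 (negate_set i S)
| obt_perm s S : obtained_from S0 S -> obtained_from S0 (permute_set s S).

Local Open Scope ring_scope.

Definition is_distr (Rr : finType) (P : Rr -> R) : Prop :=
  (forall r, 0 <= P r) /\ \sum_(r : Rr) P r = 1.

Definition correct_for (S : {set triple}) (Rr : finType) (P : Rr -> R)
  (VT : finType) (V : triple -> Rr -> VT) (i : 'I_3) : Prop :=
  exists phi : VT -> bool,
    forall x, x \in S -> \sum_(r : Rr | phi (V x r) == x i) P r = 1.

Definition private_for (S : {set triple}) (Rr : finType) (P : Rr -> R)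
  (VT : finType) (V : triple -> Rr -> VT) (i : 'I_3) : Prop :=
  forall x x', x \in S -> x' \in S -> x i = x' i ->
    forall v : VT, \sum_(r : Rr | V x r == v) P r = \sum_(r : Rr | V x' r == v) P r.

Definition i0 : 'I_3 := @Ordinal 3 0 isT.
Definition i1 : 'I_3 := @Ordinal 3 1 isT.
Definition i2 : 'I_3 := @Ordinal 3 2 isT.

Definition view1 (Rr W12 W23 W31 : finType)
  (psi : triple -> Rr -> W12 * W23 * W31) x r : W12 * W31 :=
  let: (w12, w23, w31) := psi x r in (w12, w31).
Definition view2 (Rr W12 W23 W31 : finType)
  (psi : triple -> Rr -> W12 * W23 * W31) x r : W23 * W12 :=
  let: (w12, w23, w31) := psi x r in (w23, w12).
Definition view3 (Rr W12 W23 W31 : finType)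
  (psi : triple -> Rr -> W12 * W23 * W31) x r : W31 * W23 :=
  let: (w12, w23, w31) := psi x r in (w31, w23).

(* (P_R, psi) is a 3SS scheme with domain S.  psi is defined on all triples;
   only its restriction to S matters in every condition. *)
Definition is_3SS (S : {set triple}) (Rr W12 W23 W31 : finType)
  (P : Rr -> R) (psi : triple -> Rr -> W12 * W23 * W31) : Prop :=
  is_distr P /\
  correct_for S P (view1 psi) i0 /\ correct_for S P (view2 psi) i1 /\
  correct_for S P (view3 psi) i2 /\
  private_for S P (view1 psi) i0 /\ private_for S P (view2 psi) i1 /\
  private_for S P (view3 psi) i2.

Definition log2 (x : R) : R := (ln x / ln 2)%R.

Definition achievable (S : {set triple}) (k : R) : Prop :=
  exists (Rr W12 W23 W31 : finType) (P : Rr -> R)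
         (psi : triple -> Rr -> W12 * W23 * W31),
    is_3SS S P psi /\ k = log2 (INR #|Rr|).

Definition rho_is (S : {set triple}) (v : R) : Prop :=
  achievable S v /\ forall k, achievable S k -> v <= k.

Definition S_A : {set triple} :=
  [set tr false false false; tr false false true; tr false true false;
       tr true false false].
Definition S_B : {set triple} :=
  [set tr false false false; tr false false true; tr false true false;
       tr true false false; tr true true true].
Definition S_C : {set triple} :=
  [set tr false false false; tr false false true; tr false true false;
       tr true true true].

From mathcomp Require Import all_boot all_order all_algebra all_fingroup.
From Stdlib Require Import Reals Lra.
From mathcomp Require Import Rstruct.

Set Implicit Arguments.
Unset Strict Implicit.
Unset Printing Implicit Defensive.
Import Order.TTheory GRing.Theory Num.Theory.
Local Open Scope ring_scope.

(* Everything is read on the support of P_R: privacy lets a view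
   produced under one secret be reproduced under any secret with the same bit
   of the party, and correctness forbids equal views for different bits.  With
   the secrets 000, 001, 010 this shows that under 000 neither of the shares
   W12, W31 determines the other.  A secret e with e_1 = 1 whose W12 and W31
   shares both also occur under 000 (100 directly, 111 through 010 and 001)
   then forces three distinct values of W31 on the support, each carried by
   two distinct random strings, so |R| >= 6.

   With R = Z_3 x bool uniform, an explicit scheme for S_B gives
   party i a pair (a, a + m) with a uniform and m = 0 if x_i = 1 and m a
   uniform nonzero element otherwise: x_i is "both entries agree" and nothing
   else leaks.  Schemes restrict to subsets, giving S_A and S_C; lower bounds
   pass to supersets, giving S_B from S_A.

   A scheme for S yields one for a coordinate negation of S
   (relabel the secrets) and for a coordinate permutation (relabel the secrets
   and route each share to the edge joining the permuted parties).  Both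
   operations are invertible, so rho is invariant and the theorem follows by
   induction on obtained_from. *)

Lemma distr_support (Rr : finType) (P : Rr -> R) : is_distr P -> exists r, 0 < P r.
Proof.
move=> [P_ge0 P_sum]; apply/existsP; apply: contraT; rewrite negb_exists => /forallP none.
have : \sum_(r : Rr) P r = 0.
  by apply: big1 => r _; apply/eqP; rewrite eq_le P_ge0 andbT leNgt none.
by rewrite P_sum => /eqP; rewrite oner_eq0.
Qed.

Lemma decode_on_support (S : {set triple}) (Rr VT : finType) (P : Rr -> R)
    (V : triple -> Rr -> VT) (i : 'I_3) :
  is_distr P -> correct_for S P V i ->
  exists phi : VT -> bool, forall x r, x \in S -> 0 < P r -> phi (V x r) = x i.
Proof.
move=> [P_ge0 P_sum] [phi dec]; exists phi => x r xS Pr.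
apply/eqP; apply: contraTT Pr => wrong; rewrite -leNgt.
have miss : \sum_(r | phi (V x r) != x i) P r = 0.
  move: P_sum; rewrite (bigID (fun r => phi (V x r) == x i)) /= dec //.
  by move=> /(congr1 (fun s => s - 1)); rewrite addrC addrK subrr.
by rewrite (psumr_eq0P (fun r _ => P_ge0 r) miss wrong).
Qed.

Lemma views_separate (S : {set triple}) (Rr VT : finType) (P : Rr -> R)
    (V : triple -> Rr -> VT) (i : 'I_3) :
  is_distr P -> correct_for S P V i ->
  forall x y r r', x \in S -> y \in S -> 0 < P r -> 0 < P r' ->
  V x r = V y r' -> x i = y i.
Proof.
move=> PD C x y r r' xS yS Pr Pr' E; have [phi dec] := decode_on_support PD C.
by rewrite -(dec x r) // -(dec y r') // E.
Qed.

Lemma view_reproduced (S : {set triple}) (Rr VT : finType) (P : Rr -> R)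
    (V : triple -> Rr -> VT) (i : 'I_3) :
  is_distr P -> private_for S P V i ->
  forall x x' r, x \in S -> x' \in S -> x i = x' i -> 0 < P r ->
  exists2 r', 0 < P r' & V x' r' = V x r.
Proof.
move=> [P_ge0 _] priv x x' r xS x'S Exx' Pr.
have pos : 0 < \sum_(r' | V x' r' == V x r) P r'.
  rewrite -(priv x x' xS x'S Exx') (bigD1 r) //= ltr_pwDl //.
  exact: sumr_ge0.
have [r' /andP[/eqP Vr' Pr']] : exists r', (V x' r' == V x r) && (0 < P r').
  apply/existsP; apply: contraTT pos; rewrite negb_exists -leNgt => /forallP none.
  rewrite big1 // => r' Vr'; apply/eqP; rewrite eq_le P_ge0 andbT leNgt.
  by have := none r'; rewrite Vr'.
by exists r'.
Qed.

Lemma view1E (Rr W12 W23 W31 : finType) (psi : triple -> Rr -> W12 * W23 * W31) x r :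
  view1 psi x r = ((psi x r).1.1, (psi x r).2).
Proof. by rewrite /view1; case: (psi x r) => [[]]. Qed.

Lemma view2E (Rr W12 W23 W31 : finType) (psi : triple -> Rr -> W12 * W23 * W31) x r :
  view2 psi x r = ((psi x r).1.2, (psi x r).1.1).
Proof. by rewrite /view2; case: (psi x r) => [[]]. Qed.

Lemma view3E (Rr W12 W23 W31 : finType) (psi : triple -> Rr -> W12 * W23 * W31) x r :
  view3 psi x r = ((psi x r).2, (psi x r).1.2).
Proof. by rewrite /view3; case: (psi x r) => [[]]. Qed.

(* Combinatorial core of the lower bound: three shares u, v, w, a party seeing
   (u, v) that cannot tell x from y, a party seeing (u, w) that cannot tell y
   from x, and a party seeing (v, w) that can. *)
Lemma share_not_determined (X Rr U V W : Type) (supp : Rr -> Prop)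
    (u : X -> Rr -> U) (v : X -> Rr -> V) (w : X -> Rr -> W) (x y : X) :
  (forall r, supp r -> exists2 r', supp r' & u y r' = u x r /\ v y r' = v x r) ->
  (forall r, supp r -> exists2 r', supp r' & u x r' = u y r /\ w x r' = w y r) ->
  (forall r r', supp r -> supp r' -> v x r = v y r' -> w x r = w y r' -> False) ->
  forall r, supp r -> exists2 r', supp r' & u x r' = u x r /\ v x r' <> v x r.
Proof.
move=> to_y to_x distinguish r sr.
have [r1 sr1 [u1 v1]] := to_y r sr.
have [r2 sr2 [u2 w2]] := to_x r1 sr1.
exists r2 => //; split; first by rewrite u2 u1.
by rewrite -v1 => /(distinguish r2 r1 sr2 sr1).
Qed.

Lemma card_ge6_of_fibres (T : finType) (B : eqType) (f : T -> B)
    (a b c a' b' c' : T) :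
  uniq [:: f a; f b; f c] -> f a' = f a -> f b' = f b -> f c' = f c ->
  a' != a -> b' != b -> c' != c -> (6 <= #|T|)%nat.
Proof.
rewrite /= !inE !negb_or andbT => /andP[/andP[fab fac] fbc] fa' fb' fc' na nb nc.
have apart p q : f p != f q -> p != q by apply: contraNneq => ->.
suff /card_uniqP /= <- : uniq [:: a; a'; b; b'; c; c'] by exact: max_card.
rewrite /= !inE !negb_or !andbT; repeat (apply/andP; split).
all: first [ by rewrite eq_sym | by apply: apart; rewrite ?fa' ?fb' ?fc' // eq_sym ].
Qed.

Section LowerBound.

Variables (S : {set triple}) (Rr W12 W23 W31 : finType) (P : Rr -> R)
  (psi : triple -> Rr -> W12 * W23 * W31).
Hypothesis scheme : is_3SS S P psi.

Local Notation w12 x r := (psi x r).1.1.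
Local Notation w23 x r := (psi x r).1.2.
Local Notation w31 x r := (psi x r).2.

Lemma reproduce1 x x' r : x \in S -> x' \in S -> x i0 = x' i0 -> 0 < P r ->
  exists2 r', 0 < P r' & w12 x' r' = w12 x r /\ w31 x' r' = w31 x r.
Proof.
case: scheme => PD [_ [_ [_ [priv1 _]]]] xS x'S agree Pr.
have [r' Pr'] := view_reproduced PD priv1 xS x'S agree Pr.
by rewrite !view1E => -[E12 E31]; exists r'.
Qed.

Lemma reproduce2 x x' r : x \in S -> x' \in S -> x i1 = x' i1 -> 0 < P r ->
  exists2 r', 0 < P r' & w23 x' r' = w23 x r /\ w12 x' r' = w12 x r.
Proof.
case: scheme => PD [_ [_ [_ [_ [priv2 _]]]]] xS x'S agree Pr.
have [r' Pr'] := view_reproduced PD priv2 xS x'S agree Pr.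
by rewrite !view2E => -[E23 E12]; exists r'.
Qed.

Lemma reproduce3 x x' r : x \in S -> x' \in S -> x i2 = x' i2 -> 0 < P r ->
  exists2 r', 0 < P r' & w31 x' r' = w31 x r /\ w23 x' r' = w23 x r.
Proof.
case: scheme => PD [_ [_ [_ [_ [_ priv3]]]]] xS x'S agree Pr.
have [r' Pr'] := view_reproduced PD priv3 xS x'S agree Pr.
by rewrite !view3E => -[E31 E23]; exists r'.
Qed.

Lemma separate1 x y r r' : x \in S -> y \in S -> 0 < P r -> 0 < P r' ->
  w12 x r = w12 y r' -> w31 x r = w31 y r' -> x i0 = y i0.
Proof.
case: scheme => PD [dec1 _] xS yS Pr Pr' E12 E31.
by apply: (views_separate PD dec1 xS yS Pr Pr'); rewrite !view1E E12 E31.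
Qed.

Lemma separate2 x y r r' : x \in S -> y \in S -> 0 < P r -> 0 < P r' ->
  w23 x r = w23 y r' -> w12 x r = w12 y r' -> x i1 = y i1.
Proof.
case: scheme => PD [_ [dec2 _]] xS yS Pr Pr' E23 E12.
by apply: (views_separate PD dec2 xS yS Pr Pr'); rewrite !view2E E23 E12.
Qed.

Lemma separate3 x y r r' : x \in S -> y \in S -> 0 < P r -> 0 < P r' ->
  w31 x r = w31 y r' -> w23 x r = w23 y r' -> x i2 = y i2.
Proof.
case: scheme => PD [_ [_ [dec3 _]]] xS yS Pr Pr' E31 E23.
by apply: (views_separate PD dec3 xS yS Pr Pr'); rewrite !view3E E31 E23.
Qed.

Lemma refresh31 x y : x \in S -> y \in S ->
  x i0 = y i0 -> x i1 = y i1 -> x i2 != y i2 ->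
  forall r, 0 < P r -> exists2 r', 0 < P r' & w12 x r' = w12 x r /\ w31 x r' <> w31 x r.
Proof.
move=> xS yS agree0 agree1 differ.
apply: (share_not_determined (supp := fun r => 0 < P r) (y := y)
  (u := fun x r => w12 x r) (v := fun x r => w31 x r) (w := fun x r => w23 x r)).
- by move=> r; apply: reproduce1.
- by move=> r Pr; have [r' Pr' [E23 E12]] := reproduce2 yS xS (esym agree1) Pr; exists r'.
- by move=> r r' Pr Pr' E31 E23; move: differ; rewrite (separate3 xS yS Pr Pr' E31 E23) eqxx.
Qed.

Lemma refresh12 x z : x \in S -> z \in S ->
  x i0 = z i0 -> x i2 = z i2 -> x i1 != z i1 ->
  forall r, 0 < P r -> exists2 r', 0 < P r' & w31 x r' = w31 x r /\ w12 x r' <> w12 x r.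
Proof.
move=> xS zS agree0 agree2 differ.
apply: (share_not_determined (supp := fun r => 0 < P r) (y := z)
  (u := fun x r => w31 x r) (v := fun x r => w12 x r) (w := fun x r => w23 x r)).
- by move=> r Pr; have [r' Pr' [E12 E31]] := reproduce1 xS zS agree0 Pr; exists r'.
- by move=> r; apply: reproduce3 zS xS (esym agree2).
- by move=> r r' Pr Pr' E12 E23; move: differ; rewrite (separate2 xS zS Pr Pr' E23 E12) eqxx.
Qed.

Definition covers12 x e :=
  forall re, 0 < P re -> exists2 r, 0 < P r & w12 x r = w12 e re.
Definition covers31 x e :=
  forall re, 0 < P re -> exists2 r, 0 < P r & w31 x r = w31 e re.

Lemma covers12_trans x y e : covers12 x y -> covers12 y e -> covers12 x e.
Proof. by move=> xy ye re Pre; have [ry Pry <-] := ye re Pre; apply: xy. Qed.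

Lemma covers31_trans x y e : covers31 x y -> covers31 y e -> covers31 x e.
Proof. by move=> xy ye re Pre; have [ry Pry <-] := ye re Pre; apply: xy. Qed.

(* A party holding a share cannot tell x from e, so that share covers. *)
Lemma covers_of_agree0 x e : x \in S -> e \in S -> x i0 = e i0 ->
  covers12 x e /\ covers31 x e.
Proof.
move=> xS eS agree; split=> re Pre;
  by have [r Pr [E12 E31]] := reproduce1 eS xS (esym agree) Pre; exists r.
Qed.

Lemma covers12_of_agree1 x e : x \in S -> e \in S -> x i1 = e i1 -> covers12 x e.
Proof.
move=> xS eS agree re Pre.
by have [r Pr [_ E12]] := reproduce2 eS xS (esym agree) Pre; exists r.
Qed.

Lemma covers31_of_agree2 x e : x \in S -> e \in S -> x i2 = e i2 -> covers31 x e.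
Proof.
move=> xS eS agree re Pre.
by have [r Pr [E31 _]] := reproduce3 eS xS (esym agree) Pre; exists r.
Qed.

(* The W31 shares of x at ra, at a refresh r1 of ra, and at rb are
   pairwise distinct (party 1 would otherwise see the view of e), and each is
   taken at two random strings. *)
Lemma randomness_ge6 x y z e : x \in S -> y \in S -> z \in S -> e \in S ->
  x i0 = y i0 -> x i1 = y i1 -> x i2 != y i2 ->
  x i0 = z i0 -> x i2 = z i2 -> x i1 != z i1 ->
  x i0 != e i0 -> covers12 x e -> covers31 x e -> (6 <= #|Rr|)%nat.
Proof.
move=> xS yS zS eS xy0 xy1 xy2 xz0 xz2 xz1 xe0 cov12 cov31.
have [re Pre] := distr_support (proj1 scheme).
have [ra Pra Ea] := cov12 re Pre.
have [rb Prb Eb] := cov31 re Pre.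
have apart r : 0 < P r -> w12 x r = w12 e re -> w31 x r != w31 x rb.
  move=> Pr E12; apply/eqP => E31; move: xe0.
  by rewrite (separate1 xS eS Pr Pre E12 (etrans E31 Eb)) eqxx.
have [r1 Pr1 [E1 /eqP N1]] := refresh31 xS yS xy0 xy1 xy2 Pra.
have partner r : 0 < P r -> exists2 r', w31 x r' = w31 x r & r' != r.
  move=> Pr; have [r' _ [E31 N12]] := refresh12 xS zS xz0 xz2 xz1 Pr.
  by exists r' => //; apply: contra_not_neq N12 => ->.
have [ra' Ea' Na] := partner ra Pra.
have [r1' E1' N1'] := partner r1 Pr1.
have [rb' Eb' Nb] := partner rb Prb.
apply: (card_ge6_of_fibres (f := fun r => w31 x r)) Ea' E1' Eb' Na N1' Nb.
by rewrite /= !inE negb_or apart // eq_sym N1 apart // E1.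
Qed.

End LowerBound.

Lemma correct_of_pointwise (S : {set triple}) (Rr VT : finType) (P : Rr -> R)
    (V : triple -> Rr -> VT) (i : 'I_3) (phi : VT -> bool) :
  is_distr P -> (forall x r, x \in S -> phi (V x r) = x i) -> correct_for S P V i.
Proof.
move=> [_ P_sum] dec; exists phi => x xS; rewrite -P_sum.
by apply: eq_bigl => r; rewrite dec ?eqxx.
Qed.

Lemma private_of_reindex (S : {set triple}) (Rr VT : finType) (P : Rr -> R)
    (V : triple -> Rr -> VT) (i : 'I_3) :
  (forall r r', P r = P r') ->
  (forall x x', x \in S -> x' \in S -> x i = x' i ->
     exists2 h : Rr -> Rr, injective h & forall r, V x' (h r) = V x r) ->
  private_for S P V i.
Proof.
move=> P_const reindex x x' xS x'S agree v.
have [h h_inj hV] := reindex x x' xS x'S agree.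
rewrite [RHS](reindex_inj h_inj); apply: eq_big => r; first by rewrite hV.
by move=> _; apply: P_const.
Qed.

Definition rand := ('Z_3 * bool)%type.

Definition uniform (r : rand) : R := 6%:R^-1.

Lemma uniform_distr : is_distr uniform.
Proof.
split=> [r|]; first by rewrite /uniform invr_ge0 ler0n.
rewrite sumr_const card_prod card_ord card_bool -[((Zp_trunc 3).+2 * 2)%nat]/6%nat.
by rewrite /uniform -(mulr_natr (6%:R^-1 : R)) mulVf // pnatr_eq0.
Qed.

Definition mask (b t : bool) : 'Z_3 := if b then 0 else if t then 1 else -1.

Lemma mask_eq0 b t : (mask b t == 0) = b.
Proof. by case: b; case: t. Qed.

Lemma masked_view (S : {set triple}) (V : triple -> rand -> 'Z_3 * 'Z_3) (i : 'I_3)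
    (c : triple -> bool -> 'Z_3) (flip : triple -> bool) :
  (forall x u t, x \in S -> V x (u, t) = (u + c x t, u + c x t + mask (x i) (t (+) flip x))) ->
  correct_for S uniform V i /\ private_for S uniform V i.
Proof.
move=> VE; split.
  apply: (correct_of_pointwise (phi := fun v => v.1 == v.2)) uniform_distr _.
  by move=> x [u t] xS; rewrite VE //= -{1}[u + _]addr0 (inj_eq (addrI _)) eq_sym mask_eq0.
apply: private_of_reindex => // x x' xS x'S agree.
pose sigma t := t (+) flip x (+) flip x'.
exists (fun r => (r.1 + c x r.2 - c x' (sigma r.2), sigma r.2)).
  move=> [u t] [u' t'] /pair_equal_spec[/= eq_u /addIb /addIb eq_t]; subst t'.
  by move: eq_u => /addIr /addIr ->.
by move=> [u t]; rewrite !VE //= subrK /sigma addbK agree.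
Qed.

Definition scheme_S_B (x : triple) (r : rand) : 'Z_3 * 'Z_3 * 'Z_3 :=
  let: (u, t) := r in (u, u - mask (x i1) (t (+) x i2), u + mask (x i0) t).

(* The three masks cancel on S_B, so that party 3 also sees a masked view. *)
Lemma masks_cancel x t : x \in S_B ->
  mask (x i0) t + mask (x i1) (t (+) x i2) + mask (x i2) (t (+) (x i0 || x i1)) = 0.
Proof.
rewrite !inE => /orP[/orP[/orP[/orP[]|]|]|] /eqP ->; rewrite !ffunE /=.
all: by case: t => /=; apply/eqP.
Qed.

Lemma scheme_S_B_3SS : is_3SS S_B uniform scheme_S_B.
Proof.
have [C1 P1] : correct_for S_B uniform (view1 scheme_S_B) i0 /\
               private_for S_B uniform (view1 scheme_S_B) i0.
  apply: (masked_view (c := fun _ _ => 0) (flip := fun _ => false)) => x u t _.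
  by rewrite view1E /= addr0 addbF.
have [C2 P2] : correct_for S_B uniform (view2 scheme_S_B) i1 /\
               private_for S_B uniform (view2 scheme_S_B) i1.
  apply: (masked_view (c := fun x t => - mask (x i1) (t (+) x i2)) (flip := fun x => x i2)).
  by move=> x u t _; rewrite view2E /= subrK.
have [C3 P3] : correct_for S_B uniform (view3 scheme_S_B) i2 /\
               private_for S_B uniform (view3 scheme_S_B) i2.
  apply: (masked_view (c := fun x t => mask (x i0) t) (flip := fun x => x i0 || x i1)).
  move=> x u t xS; rewrite view3E /= -addrA; congr pair; congr (u + _).
  by apply/eqP; rewrite eq_sym -subr_eq0 opprK addrAC masks_cancel.
exact: (conj uniform_distr (conj C1 (conj C2 (conj C3 (conj P1 (conj P2 P3)))))).
Qed.

Lemma achievable_S_B : achievable S_B (log2 6%R).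
Proof.
exists rand, ('Z_3 : finType), ('Z_3 : finType), ('Z_3 : finType), uniform, scheme_S_B.
split; first exact: scheme_S_B_3SS.
by rewrite card_prod card_ord card_bool INR_IZR_INZ.
Qed.

Lemma achievable_subset (S S' : {set triple}) k :
  S \subset S' -> achievable S' k -> achievable S k.
Proof.
move=> /subsetP sub [Rr [W12 [W23 [W31 [P [psi [sch ->]]]]]]].
exists Rr, W12, W23, W31, P, psi; split => //.
case: sch => [PD [C1 [C2 [C3 [P1 [P2 P3]]]]]].
have corr (VT : finType) (V : triple -> Rr -> VT) i :
    correct_for S' P V i -> correct_for S P V i.
  by move=> [phi dec]; exists phi => x /sub; apply: dec.
have priv (VT : finType) (V : triple -> Rr -> VT) i :
    private_for S' P V i -> private_for S P V i.
  by move=> pv x x' /sub xS /sub x'S; apply: pv.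
exact: (conj PD (conj (corr _ _ _ C1) (conj (corr _ _ _ C2) (conj (corr _ _ _ C3)
  (conj (priv _ _ _ P1) (conj (priv _ _ _ P2) (priv _ _ _ P3))))))).
Qed.

Lemma correct_transfer (S T : {set triple}) (Rr VT VT' : finType) (P : Rr -> R)
    (V : triple -> Rr -> VT) (V' : triple -> Rr -> VT') (g : VT -> VT')
    (f : triple -> triple) (j k : 'I_3) (b : bool) :
  correct_for S P V k -> {in T, forall x, f x \in S} ->
  {in T, forall x : triple, x j = f x k (+) b} ->
  (forall phi : VT -> bool, exists phi' : VT' -> bool, forall v, phi' (g v) = phi v) ->
  (forall x r, V' x r = g (V (f x) r)) ->
  correct_for T P V' j.
Proof.
move=> [phi dec] fT bit decode_g V'E; have [phi' phi'E] := decode_g phi.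
exists (fun v => phi' v (+) b) => x xT; rewrite -(dec (f x) (fT x xT)).
by apply: eq_bigl => r; rewrite V'E phi'E bit // (inj_eq (@addIb b)).
Qed.

Lemma private_transfer (S T : {set triple}) (Rr VT VT' : finType) (P : Rr -> R)
    (V : triple -> Rr -> VT) (V' : triple -> Rr -> VT') (g : VT -> VT')
    (f : triple -> triple) (j k : 'I_3) :
  private_for S P V k -> {in T, forall x, f x \in S} ->
  {in T &, forall x x' : triple, x j = x' j -> f x k = f x' k} ->
  (forall x r, V' x r = g (V (f x) r)) ->
  private_for T P V' j.
Proof.
move=> priv fT agree V'E x x' xT x'T Exx' v.
have by_old_view y : \sum_(r | V' y r == v) P r =
    \sum_(w | g w == v) \sum_(r | V (f y) r == w) P r.
  rewrite (eq_bigl (fun r => g (V (f y) r) == v)); last by move=> r; rewrite V'E.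
  rewrite (partition_big (fun r => V (f y) r) (fun w => g w == v)) //.
  apply: eq_bigr => w /eqP gw; apply: eq_bigl => r.
  by case: (V (f y) r =P w) => [->|]; rewrite ?gw ?eqxx ?andbF.
rewrite !by_old_view; apply: eq_bigr => w _.
exact: priv (fT x xT) (fT x' x'T) (agree x x' xT x'T Exx') w.
Qed.

Lemma relabel_3SS (S T : {set triple}) (Rr W12 W23 W31 : finType) (P : Rr -> R)
    (psi : triple -> Rr -> W12 * W23 * W31) (f : triple -> triple) (flip : 'I_3 -> bool) :
  {in T, forall x, f x \in S} -> (forall (x : triple) j, x j = f x j (+) flip j) ->
  is_3SS S P psi -> is_3SS T P (fun x => psi (f x)).
Proof.
move=> fT bit [PD [C1 [C2 [C3 [P1 [P2 P3]]]]]].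
have bitT j : {in T, forall x : triple, x j = f x j (+) flip j} by move=> x _.
have agree j : {in T &, forall x x' : triple, x j = x' j -> f x j = f x' j}.
  by move=> x x' _ _; rewrite (bit x) (bit x') => /addIb.
have id_decode (VT : Type) (phi : VT -> bool) :
    exists phi' : VT -> bool, forall v, phi' v = phi v.
  by exists phi.
have same (VT : Type) (V : triple -> Rr -> VT) x r : V (f x) r = V (f x) r by [].
split=> //; split.
  exact: (correct_transfer (g := fun v => v) C1 fT (bitT i0) (id_decode _) (same _ _)).
split; first exact: (correct_transfer (g := fun v => v) C2 fT (bitT i1) (id_decode _) (same _ _)).
split; first exact: (correct_transfer (g := fun v => v) C3 fT (bitT i2) (id_decode _) (same _ _)).
split; first exact: (private_transfer (g := fun v => v) P1 fT (agree i0) (same _ _)).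
split; first exact: (private_transfer (g := fun v => v) P2 fT (agree i1) (same _ _)).
exact: (private_transfer (g := fun v => v) P3 fT (agree i2) (same _ _)).
Qed.

Lemma neg_coordE i (x : triple) j : neg_coord i x j = x j (+) (j == i).
Proof. by rewrite ffunE; case: (j == i); rewrite ?addbT ?addbF. Qed.

Lemma neg_coordK i : involutive (neg_coord i).
Proof. by move=> x; apply/ffunP => j; rewrite !neg_coordE -addbA addbb addbF. Qed.

Lemma negate_achievable i S k : achievable S k -> achievable (negate_set i S) k.
Proof.
move=> [Rr [W12 [W23 [W31 [P [psi [sch ->]]]]]]].
exists Rr, W12, W23, W31, P, (fun x => psi (neg_coord i x)); split => //.
apply: (relabel_3SS (flip := fun j => j == i)) sch.
- by move=> x /imsetP[y yS ->]; rewrite neg_coordK.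
- by move=> x j; rewrite neg_coordE -addbA addbb addbF.
Qed.

(* Edge k joins parties k and k+1 and carries W12, W23 or W31; share k w is
   that share, tagged, and party k sees the two shares on its edges. *)
Definition share (W12 W23 W31 : Type) (k : 'I_3) (w : W12 * W23 * W31) :
    (W12 + W23 + W31)%type :=
  if val k == 0%N then inl (inl w.1.1)
  else if val k == 1%N then inl (inr w.1.2) else inr w.2.

Definition share_view (W12 W23 W31 : Type) (k : 'I_3) (w : W12 * W23 * W31) :=
  (share k w, share (ord_pred k) w).

(* The edge joining two distinct parties a and b. *)
Definition edge (a b : 'I_3) : 'I_3 := if b == ordS a then a else b.

Lemma edges_at (a b c : 'I_3) : a != b -> b != c -> a != c ->
  (edge a b, edge c a) = (a, ord_pred a) \/ (edge a b, edge c a) = (ord_pred a, a).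
Proof.
case: a b c => [[|[|[|?]]] ?] [[|[|[|?]]] ?] [[|[|[|?]]] ?] //= _ _ _;
  rewrite /edge; [left|right|right|left|left|right]; congr pair; exact: val_inj.
Qed.

Lemma ord3_cases (k : 'I_3) : [\/ k = i0, k = i1 | k = i2].
Proof.
by case: k => [[|[|[|?]]] ?] //; [constructor 1|constructor 2|constructor 3]; apply: val_inj.
Qed.

Lemma share_view_3SS (S : {set triple}) (Rr W12 W23 W31 : finType) (P : Rr -> R)
    (psi : triple -> Rr -> W12 * W23 * W31) (k : 'I_3) :
  is_3SS S P psi ->
  correct_for S P (fun x r => share_view k (psi x r)) k /\
  private_for S P (fun x r => share_view k (psi x r)) k.
Proof.
move=> [_ [C1 [C2 [C3 [P1 [P2 P3]]]]]].
have inS : {in S, forall x : triple, x \in S} by [].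
have bit j : {in S, forall x : triple, x j = x j (+) false} by move=> x _; rewrite addbF.
have agree j : {in S &, forall x x' : triple, x j = x' j -> x j = x' j} by [].
case: (ord3_cases k) => ->.
- pose g (v : W12 * W31) : (W12 + W23 + W31) * (W12 + W23 + W31) := (inl (inl v.1), inr v.2).
  have VE x r : share_view i0 (psi x r) = g (view1 psi x r) by rewrite view1E.
  split; last exact: private_transfer P1 inS (agree _) VE.
  apply: correct_transfer C1 inS (bit _) _ VE => phi.
  by exists (fun v => if v is (inl (inl a), inr c) then phi (a, c) else false); case.
- pose g (v : W23 * W12) : (W12 + W23 + W31) * (W12 + W23 + W31) := (inl (inr v.1), inl (inl v.2)).
  have VE x r : share_view i1 (psi x r) = g (view2 psi x r) by rewrite view2E.
  split; last exact: private_transfer P2 inS (agree _) VE.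
  apply: correct_transfer C2 inS (bit _) _ VE => phi.
  by exists (fun v => if v is (inl (inr b), inl (inl a)) then phi (b, a) else false); case.
- pose g (v : W31 * W23) : (W12 + W23 + W31) * (W12 + W23 + W31) := (inr v.1, inl (inr v.2)).
  have VE x r : share_view i2 (psi x r) = g (view3 psi x r) by rewrite view3E.
  split; last exact: private_transfer P3 inS (agree _) VE.
  apply: correct_transfer C3 inS (bit _) _ VE => phi.
  by exists (fun v => if v is (inr c, inl (inr b)) then phi (c, b) else false); case.
Qed.

Lemma permuted_view (S T : {set triple}) (Rr W12 W23 W31 : finType) (P : Rr -> R)
    (psi : triple -> Rr -> W12 * W23 * W31) (f : triple -> triple) (a b c j : 'I_3)
    (V' : triple -> Rr -> ((W12 + W23 + W31) * (W12 + W23 + W31))%type) :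
  is_3SS S P psi -> a != b -> b != c -> a != c ->
  {in T, forall x, f x \in S} -> (forall x : triple, x j = f x a) ->
  (forall x r, V' x r = (share (edge a b) (psi (f x) r), share (edge c a) (psi (f x) r))) ->
  correct_for T P V' j /\ private_for T P V' j.
Proof.
move=> sch ab bc ac fT bit V'E.
have [C Pv] := share_view_3SS a sch.
have bitT : {in T, forall x : triple, x j = f x a (+) false} by move=> x _; rewrite addbF.
have agree : {in T &, forall x x' : triple, x j = x' j -> f x a = f x' a}.
  by move=> x x' _ _; rewrite !bit.
case: (edges_at ab bc ac) => -[eab eca].
- have VE x r : V' x r = (fun v => v) (share_view a (psi (f x) r)).
    by rewrite V'E eab eca.
  split; last exact: (private_transfer (g := fun v => v) Pv fT agree VE).
  by apply: (correct_transfer (g := fun v => v) C fT bitT _ VE) => phi; exists phi.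
- have VE x r : V' x r = (fun v => (v.2, v.1)) (share_view a (psi (f x) r)).
    by rewrite V'E eab eca.
  split; last exact: (private_transfer (g := fun v => (v.2, v.1)) Pv fT agree VE).
  apply: (correct_transfer (g := fun v => (v.2, v.1)) C fT bitT _ VE) => phi.
  by exists (fun v => phi (v.2, v.1)); case.
Qed.

(* The scheme for permute_set s S: new party j plays old party s j. *)
Definition permute_scheme (s : 'S_3) (Rr W12 W23 W31 : Type)
    (psi : triple -> Rr -> W12 * W23 * W31) (x : triple) (r : Rr) :=
  let w := psi (perm_coord s^-1 x) r in
  (share (edge (s i0) (s i1)) w, share (edge (s i1) (s i2)) w,
   share (edge (s i2) (s i0)) w).

Lemma permute_achievable (s : 'S_3) S k :
  achievable S k -> achievable (permute_set s S) k.
Proof.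
move=> [Rr [W12 [W23 [W31 [P [psi [sch ->]]]]]]].
pose W := (W12 + W23 + W31)%type.
exists Rr, W, W, W, P, (permute_scheme s psi); split => //.
have fT : {in permute_set s S, forall x, perm_coord s^-1 x \in S}.
  move=> x /imsetP[y yS ->]; suff -> : perm_coord s^-1 (perm_coord s y) = y by [].
  by apply/ffunP => j; rewrite !ffunE permKV.
have bit j (x : triple) : x j = perm_coord s^-1 x (s j) by rewrite ffunE permK.
have ne p q : p != q -> s p != s q by rewrite (inj_eq perm_inj).
have [C1 P1] := permuted_view (V' := view1 (permute_scheme s psi)) sch
  (ne i0 i1 isT) (ne i1 i2 isT) (ne i0 i2 isT) fT (bit i0) (fun x r => erefl).
have [C2 P2] := permuted_view (V' := view2 (permute_scheme s psi)) sch
  (ne i1 i2 isT) (ne i2 i0 isT) (ne i1 i0 isT) fT (bit i1) (fun x r => erefl).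
have [C3 P3] := permuted_view (V' := view3 (permute_scheme s psi)) sch
  (ne i2 i0 isT) (ne i0 i1 isT) (ne i2 i1 isT) fT (bit i2) (fun x r => erefl).
by case: sch => PD _; exact: (conj PD (conj C1 (conj C2 (conj C3 (conj P1 (conj P2 P3)))))).
Qed.

Lemma rho_transport (op op' : {set triple} -> {set triple}) S v :
  (forall S k, achievable S k -> achievable (op S) k) ->
  (forall S k, achievable S k -> achievable (op' S) k) -> op' (op S) = S ->
  rho_is S v -> rho_is (op S) v.
Proof.
move=> op_ach op'_ach opK [vS minS]; split; first exact: op_ach.
by move=> k /op'_ach; rewrite opK; apply: minS.
Qed.

Lemma negate_setK i : involutive (negate_set i).
Proof.
by move=> S; rewrite /negate_set -imset_comp (eq_imset _ (neg_coordK i)) imset_id.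
Qed.

Lemma permute_setK (s : 'S_3) S : permute_set s^-1 (permute_set s S) = S.
Proof.
rewrite /permute_set -imset_comp (@eq_imset _ _ _ (fun x => x)) ?imset_id // => x /=.
by apply/ffunP => j; rewrite !ffunE permKV.
Qed.

Lemma rho_obtained S0 S v : rho_is S0 v -> obtained_from S0 S -> rho_is S v.
Proof.
move=> rho0; elim=> [//|i S' _|s S' _].
- exact: rho_transport (negate_achievable i) (negate_achievable i) (negate_setK i S').
- exact: rho_transport (permute_achievable s) (permute_achievable s^-1) (permute_setK s S').
Qed.

Lemma log2_6_le (n : nat) : (6 <= n)%nat -> log2 6%R <= log2 (INR n).
Proof.
move=> /ssrnat.leP /le_INR; rewrite INR_IZR_INZ /= => le6n.
apply/RleP; rewrite /log2 /Rdiv; apply: Rmult_le_compat_r.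
  by apply/Rlt_le/Rinv_0_lt_compat; have := ln_lt_2; lra.
case: (Rle_lt_or_eq_dec _ _ le6n) => [lt6n|<-]; last exact: Rle_refl.
by apply/Rlt_le/ln_increasing; first lra.
Qed.

(* S_A: x = 000, y = 001, z = 010 and e = 100, which agrees with 000 in bits
   2 and 3. *)
Lemma lower_bound_S_A k : achievable S_A k -> log2 6%R <= k.
Proof.
move=> [Rr [W12 [W23 [W31 [P [psi [sch ->]]]]]]]; apply: log2_6_le.
apply: (randomness_ge6 sch (x := tr false false false) (y := tr false false true)
  (z := tr false true false) (e := tr true false false)).
all: rewrite ?inE ?eqxx ?orbT ?ffunE //=.
- by apply: (covers12_of_agree1 sch); rewrite ?inE ?eqxx ?orbT ?ffunE.
- by apply: (covers31_of_agree2 sch); rewrite ?inE ?eqxx ?orbT ?ffunE.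
Qed.

(* S_C: e = 111 is reached through 010 for W12 and through 001 for W31. *)
Lemma lower_bound_S_C k : achievable S_C k -> log2 6%R <= k.
Proof.
move=> [Rr [W12 [W23 [W31 [P [psi [sch ->]]]]]]]; apply: log2_6_le.
apply: (randomness_ge6 sch (x := tr false false false) (y := tr false false true)
  (z := tr false true false) (e := tr true true true)).
all: rewrite ?inE ?eqxx ?orbT ?ffunE //=.
- apply: (covers12_trans (y := tr false true false)).
    by case: (covers_of_agree0 sch (x := tr false false false) (e := tr false true false));
      rewrite ?inE ?eqxx ?orbT ?ffunE.
  by apply: (covers12_of_agree1 sch); rewrite ?inE ?eqxx ?orbT ?ffunE.
- apply: (covers31_trans (y := tr false false true)).
    by case: (covers_of_agree0 sch (x := tr false false false) (e := tr false false true));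
      rewrite ?inE ?eqxx ?orbT ?ffunE.
  by apply: (covers31_of_agree2 sch); rewrite ?inE ?eqxx ?orbT ?ffunE.
Qed.

Lemma S_A_sub_S_B : S_A \subset S_B.
Proof. by apply/subsetP => x; rewrite !inE -!orbA => /or4P[] ->; rewrite ?orbT. Qed.

Lemma S_C_sub_S_B : S_C \subset S_B.
Proof. by apply/subsetP => x; rewrite !inE -!orbA => /or4P[] ->; rewrite ?orbT. Qed.

Lemma rho_S_A : rho_is S_A (log2 6%R).
Proof.
split; last exact: lower_bound_S_A.
exact: achievable_subset S_A_sub_S_B achievable_S_B.
Qed.

Lemma rho_S_B : rho_is S_B (log2 6%R).
Proof.
split; first exact: achievable_S_B.
by move=> k /(achievable_subset S_A_sub_S_B); apply: lower_bound_S_A.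
Qed.

Lemma rho_S_C : rho_is S_C (log2 6%R).
Proof.
split; last exact: lower_bound_S_C.
exact: achievable_subset S_C_sub_S_B achievable_S_B.
Qed.

Theorem mainTheorem9 (S : {set triple}) :
  (obtained_from S_A S \/ obtained_from S_B S \/ obtained_from S_C S) ->
  rho_is S (log2 6%R).
Proof.
case=> [fromA|[fromB|fromC]].
- exact: rho_obtained rho_S_A fromA.
- exact: rho_obtained rho_S_B fromB.
- exact: rho_obtained rho_S_C fromC.
Qed.
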